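(* Let $n>1$ and let $\mathbf M_n=(M_n,\vee,\wedge,0,1)$ be the lattice with $M_n=\{0,a_1,\dots,a_n,1\}$, where $a_1,\dots,a_n$ are pairwise incomparable atoms and coatoms. Then for all $a,b,c\in M_n$: $a\wedge b\le c$ if and only if $\{a\}\le_1 b\to c$.
   Context: For $a\in L$, $a^+:=\{x\in L\mid a\vee x=1,\ a\wedge x=0\}$ (the set of all complements of $a$). For $a,b\in L$, $a\to b:=\{x\vee(a\wedge b)\mid x\in a^+\}$. For $A,B\subseteq L$, $A\le_1B$ means that for every $x\in A$ there exists $y\in B$ with $x\le y$. *)

From mathcomp Require Import all_boot.
Set Implicit Arguments. Unset Strict Implicit. Unset Printing Implicit Defensive.

Inductive Mn (n : nat) : Type := MBot | MAtom of 'I_n | MTop.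
Arguments MBot {n}. Arguments MTop {n}.

Definition Mjoin n (x y : Mn n) : Mn n :=
  match x, y with
  | MBot, _ => y
  | _, MBot => x
  | MAtom i, MAtom j => if i == j then MAtom i else MTop
  | _, _ => MTop
  end.

Definition Mmeet n (x y : Mn n) : Mn n :=
  match x, y with
  | MTop, _ => y
  | _, MTop => x
  | MAtom i, MAtom j => if i == j then MAtom i else MBot
  | _, _ => MBot
  end.

Definition Mle n (x y : Mn n) : Prop := Mmeet x y = x.

Definition Mcompl n (a : Mn n) : Mn n -> Prop :=
  fun x => Mjoin a x = MTop /\ Mmeet a x = MBot.

Definition Mimpl n (a b : Mn n) : Mn n -> Prop :=
  fun z => exists2 x, Mcompl a x & z = Mjoin x (Mmeet a b).

Definition Mle1 n (A B : Mn n -> Prop) : Prop :=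
  forall x, A x -> exists2 y, B y & Mle x y.

From mathcomp Require Import all_boot.
Set Implicit Arguments. Unset Strict Implicit. Unset Printing Implicit Defensive.

(* (<=) M_n is modular, so for a complement x of b we get
   (x \/ (b /\ c)) /\ b = (x /\ b) \/ (b /\ c) = b /\ c; hence a <= x \/ (b /\ c)
   gives a /\ b <= b /\ c <= c.
   (=>) For b = 0 or b = 1 the complement is forced (1, resp. 0) and works.
   For an atom b, either b <= c, and then x \/ b = 1 for any complement x
   (one exists because n > 1), or b /\ c = 0; then a /\ b = 0, so a is 0 or an
   atom other than b, and in the latter case a is itself a complement of b. *)

Ltac Mn_cases :=
  rewrite /Mle /Mcompl /=;
  repeat (case: eqP => [?|?]; subst => //=); try congruence.

Section MnLattice.

Variable n : nat.
Implicit Types (x y z t : Mn n) (i j : 'I_n).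

Lemma MmeetC x y : Mmeet x y = Mmeet y x.
Proof. by case: x y => [|i|] [|j|] //=; Mn_cases. Qed.

Lemma MjoinC x y : Mjoin x y = Mjoin y x.
Proof. by case: x y => [|i|] [|j|] //=; Mn_cases. Qed.

Lemma Mjoinx0 x : Mjoin x MBot = x.
Proof. by case: x. Qed.

Lemma Mjoin1x x : Mjoin MTop x = MTop.
Proof. by case: x. Qed.

Lemma Mmeetx1 x : Mmeet x MTop = x.
Proof. by case: x. Qed.

Lemma Mlexx x : Mle x x.
Proof. by case: x => //= i; Mn_cases. Qed.

Lemma Mlex1 x : Mle x MTop.
Proof. by case: x. Qed.

Lemma Mlex0 x : Mle x MBot -> x = MBot.
Proof. by case: x. Qed.

Lemma Mle_trans x y z : Mle x y -> Mle y z -> Mle x z.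
Proof. by case: x y z => [|i|] [|j|] [|k|]; Mn_cases. Qed.

Lemma MleIl x y : Mle (Mmeet x y) x.
Proof. by case: x y => [|i|] [|j|]; Mn_cases. Qed.

Lemma MleIr x y : Mle (Mmeet y x) x.
Proof. by rewrite MmeetC; apply: MleIl. Qed.

Lemma MlexI x y z : Mle x y -> Mle x z -> Mle x (Mmeet y z).
Proof. by case: x y z => [|i|] [|j|] [|k|]; Mn_cases. Qed.

Lemma MleI2 x y z t : Mle x z -> Mle y t -> Mle (Mmeet x y) (Mmeet z t).
Proof.
move=> le_xz le_yt; apply: MlexI.
- exact: Mle_trans (MleIl x y) le_xz.
- exact: Mle_trans (MleIr y x) le_yt.
Qed.

Lemma Mmodular x y z : Mle y z -> Mmeet (Mjoin x y) z = Mjoin (Mmeet x z) y.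
Proof. by case: x y z => [|i|] [|j|] [|k|]; Mn_cases. Qed.

Lemma Mmeet_atom i x : Mmeet (MAtom i) x = MAtom i \/ Mmeet (MAtom i) x = MBot.
Proof. by case: x => [|j|]; [right | Mn_cases; [left | right] | left]. Qed.

Lemma Mcompl_atom i j : j != i -> Mcompl (MAtom i) (MAtom j).
Proof. by rewrite /Mcompl /= eq_sym => /negbTE ->. Qed.

Hypothesis n_gt1 : 1 < n.

Lemma exists_other_atom i : exists j, j != i.
Proof.
have n_gt0 : 0 < n by apply: ltnW.
have [i0 | i_neq0] := eqVneq (nat_of_ord i) 0.
- by exists (Ordinal n_gt1); rewrite -val_eqE /= i0.
- by exists (Ordinal n_gt0); rewrite -val_eqE /= eq_sym.
Qed.

Lemma exists_Mcompl_atom_ge i x :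
  Mmeet (MAtom i) x = MBot -> exists2 y, Mcompl (MAtom i) y & Mle x y.
Proof.
have [j j_neq_i] := exists_other_atom i.
case: x => [|k|] //= meet0.
- by exists (MAtom j); first exact: Mcompl_atom.
- exists (MAtom k); last exact: Mlexx.
  by apply: Mcompl_atom; move: meet0; case: (i =P k) => // /nesym/eqP.
Qed.

End MnLattice.

Lemma Mmeet_le_of_le_compl_join n (a b c x : Mn n) :
  Mcompl b x -> Mle a (Mjoin x (Mmeet b c)) -> Mle (Mmeet a b) c.
Proof.
move=> [_ bx0] le_a.
have meet_b : Mmeet (Mjoin x (Mmeet b c)) b = Mmeet b c.
  by rewrite (Mmodular _ (MleIl b c)) MmeetC bx0.
apply: Mle_trans (MleIr c b).
by rewrite -meet_b; apply: MleI2 le_a (Mlexx b).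
Qed.

Lemma exists_compl_le_join n (a b c : Mn n) : 1 < n ->
  Mle (Mmeet a b) c -> exists2 x, Mcompl b x & Mle a (Mjoin x (Mmeet b c)).
Proof.
move=> n_gt1; case: b => [|i|] le_ab_c.
- by exists MTop; rewrite ?Mjoin1x; [split | exact: Mlex1].
- have [j j_neq_i] := exists_other_atom n_gt1 i.
  have [b_le_c | bc0] := Mmeet_atom i c.
    exists (MAtom j); first exact: Mcompl_atom.
    by rewrite b_le_c MjoinC (Mcompl_atom j_neq_i).1; apply: Mlex1.
  rewrite bc0.
  have disj : Mmeet (MAtom i) a = MBot.
    by apply: Mlex0; rewrite -bc0 MmeetC; apply: MlexI (MleIr _ _) le_ab_c.
  have [x compl_x le_ax] := exists_Mcompl_atom_ge n_gt1 disj.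
  by exists x; rewrite ?Mjoinx0.
- by exists MBot; last by rewrite Mmeetx1 in le_ab_c.
Qed.

Theorem proposition5 (n : nat) (hn : 1 < n) (a b c : Mn n) :
  Mle (Mmeet a b) c <-> Mle1 (fun x => x = a) (Mimpl b c).
Proof.
split=> [le_ab_c _ -> | below_impl].
- have [x compl_x le_a] := exists_compl_le_join hn le_ab_c.
  by exists (Mjoin x (Mmeet b c)); first exists x.
- have [_ [x compl_x ->] le_a] := below_impl a erefl.
  exact: Mmeet_le_of_le_compl_join compl_x le_a.
Qed.
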